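(* The sequence $(M_n)_{n\ge2}$ defined by $$M_n=\frac{2}{n-1}Z_n-4\bigl(\Psi(n)+\gamma\bigr)$$ is a martingale with respect to the filtration $(\mathbb{F}_n)_{n\ge2}$, where $\Psi$ is the digamma function and $\gamma$ Euler's constant.
   Context: Consider the random sequence of trees $(T_n)_{n\ge1}$ with node labels $1,\dots,n$ defined as follows: $T_1$ is a single node labeled $1$; $T_2$ consists of nodes $1,2$ joined by an edge; for $n\ge3$, $T_n$ is obtained from $T_{n-1}$ by adding a node labeled $n$ and an edge joining it to a node $i\in\{1,\dots,n-1\}$ chosen, conditionally on $T_1,\dots,T_{n-1}$, with probability $D_{n-1,i}/(2(n-2))$, where $D_{m,i}$ is the degree of node $i$ in $T_m$. The Zagreb index of $T_n$ is $Z_n=\sum_{j=1}^n D_{n,j}^2$. $\mathbb{F}_n$ is the $\sigma$-field generated by $T_1,\dots,T_n$. *)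

From Stdlib Require Import Reals List Arith Lra.
Import ListNotations.
Open Scope R_scope.

(* A tree history T_1,...,T_n (n >= 1) is encoded by the list
   p = [a_2; a_3; ...; a_n] where a_k is the label of the node to which
   node k was attached when it was added.  So T_n has n = S (length p) nodes
   labelled 1..n and edges {k, a_k}, 2 <= k <= n.  The prefix firstn (k-1) p
   encodes T_k, so p encodes the whole history (T_1,...,T_n), i.e. an atom of
   the sigma-field F_n. *)

Definition nnodes (p : list nat) : nat := S (length p).

Definition deg (p : list nat) (i : nat) : nat :=
  count_occ Nat.eq_dec p i
  + (if andb (Nat.leb 2 i) (Nat.leb i (nnodes p)) then 1 else 0)%nat.

Definition rsum (f : nat -> R) (a len : nat) : R :=
  fold_right Rplus 0 (map f (seq a len)).

Definition zagreb (p : list nat) : R :=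
  rsum (fun j => INR (deg p j) ^ 2) 1 (nnodes p).

(* Transition probability: given the history p (T_m with m = nnodes p >= 2),
   node m+1 is attached to node i with probability D_{m,i} / (2 (m-1)). *)
Definition trans (p : list nat) (i : nat) : R :=
  if andb (Nat.leb 1 i) (Nat.leb i (nnodes p))
  then INR (deg p i) / (2 * INR (length p))
  else 0.

(* Probability of the history p (for nnodes p >= 2): node 2 is attached to
   node 1 with probability 1, then the transitions above. *)
Definition histprob (p : list nat) : R :=
  match p with
  | [] => 1
  | a :: _ =>
      (if Nat.eqb a 1 then 1 else 0) *
      fold_right Rmult 1
        (map (fun k => trans (firstn k p) (nth k p O)) (seq 1 (length p - 1)))
  end.

Definition is_euler_gamma (g : R) : Prop :=
  Un_cv (fun n => sum_f_R0 (fun k => / INR (S k)) n - ln (INR (S n))) g.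

Definition is_digamma (g : R) (psi : R -> R) : Prop :=
  forall x, 0 < x ->
    infinite_sum (fun k => / INR (S k) - / (INR k + x)) (psi x + g).

Definition Mseq (g : R) (psi : R -> R) (p : list nat) : R :=
  2 / INR (nnodes p - 1) * zagreb p - 4 * (psi (INR (nnodes p)) + g).

(* Attaching the new node to node i raises D_i by one and adds a leaf of degree one, so
   Z_{n+1} = Z_n + 2 D_{n,i} + 2.  As the degrees of T_n sum to 2(n-1) and node i is chosen
   with probability D_{n,i}/(2(n-1)), this gives E[Z_{n+1} | F_n] = n/(n-1) Z_n + 2, i.e.
   E[2/n Z_{n+1} | F_n] = 2/(n-1) Z_n + 4/n.  The recurrence Psi(n+1) = Psi(n) + 1/n,
   obtained by telescoping the series defining Psi, absorbs the drift 4/n. *)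

From Stdlib Require Import Reals List Lra Lia ZArith.
Import ListNotations.
Open Scope R_scope.

Lemma rsum_S f a len : rsum f a (S len) = f a + rsum f (S a) len.
Proof. reflexivity. Qed.

Lemma rsum_Sr f a len : rsum f a (S len) = rsum f a len + f (a + len)%nat.
Proof.
  revert a; induction len as [|len IH]; intro a.
  - rewrite rsum_S, Nat.add_0_r; unfold rsum; simpl; ring.
  - rewrite rsum_S, IH, (rsum_S f a len).
    replace (S a + len)%nat with (a + S len)%nat by lia; ring.
Qed.

Lemma rsum_ext f h a len :
  (forall j, (a <= j < a + len)%nat -> f j = h j) -> rsum f a len = rsum h a len.
Proof.
  revert a; induction len as [|len IH]; intros a Hfh; [reflexivity|].
  rewrite !rsum_S, (Hfh a), (IH (S a)); [reflexivity | | lia].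
  intros j Hj; apply Hfh; lia.
Qed.

Lemma rsum_plus f h a len :
  rsum (fun j => f j + h j) a len = rsum f a len + rsum h a len.
Proof.
  revert a; induction len as [|len IH]; intro a; [unfold rsum; simpl; ring|].
  rewrite !rsum_S, IH; ring.
Qed.

Lemma rsum_scal c f a len : rsum (fun j => c * f j) a len = c * rsum f a len.
Proof.
  revert a; induction len as [|len IH]; intro a; [unfold rsum; simpl; ring|].
  rewrite !rsum_S, IH; ring.
Qed.

Lemma rsum_const c a len : rsum (fun _ => c) a len = INR len * c.
Proof.
  revert a; induction len as [|len IH]; intro a; [unfold rsum; simpl; ring|].
  rewrite !rsum_S, IH, S_INR; ring.
Qed.

Lemma rsum_indicator i c a len :
  rsum (fun j => if Nat.eqb j i then c else 0) a len
  = if andb (Nat.leb a i) (Nat.ltb i (a + len)) then c else 0.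
Proof.
  revert a; induction len as [|len IH]; intro a.
  - simpl; destruct (Nat.leb_spec a i), (Nat.ltb_spec i (a + 0)); simpl; lia || reflexivity.
  - rewrite rsum_S, IH.
    destruct (Nat.eqb_spec a i), (Nat.leb_spec a i), (Nat.ltb_spec i (a + S len)),
      (Nat.leb_spec (S a) i), (Nat.ltb_spec i (S a + len)); simpl; lia || ring.
Qed.

Lemma rsum_count_occ (l : list nat) a len :
  (forall x, In x l -> (a <= x < a + len)%nat) ->
  rsum (fun j => INR (count_occ Nat.eq_dec l j)) a len = INR (length l).
Proof.
  induction l as [|x l IH]; intro Hl.
  - rewrite (rsum_ext _ (fun _ => 0)), rsum_const by reflexivity; simpl; ring.
  - rewrite (rsum_ext _ (fun j => INR (count_occ Nat.eq_dec l j) + (if Nat.eqb j x then 1 else 0))).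
    + rewrite rsum_plus, IH, rsum_indicator by (intros; apply Hl; simpl; auto).
      destruct (Hl x (or_introl eq_refl)).
      destruct (Nat.leb_spec a x), (Nat.ltb_spec x (a + len)); try lia.
      simpl length; rewrite S_INR; simpl; ring.
    + intros j _; simpl.
      destruct (Nat.eq_dec x j), (Nat.eqb_spec j x); try lia; rewrite ?S_INR; ring.
Qed.

Lemma prod_map_neq0_in {A} (f : A -> R) l x :
  fold_right Rmult 1 (map f l) <> 0 -> In x l -> f x <> 0.
Proof.
  induction l as [|y l IH]; simpl; intros Hprod Hx; [contradiction|].
  destruct Hx as [<- | Hx]; intro Hfx; apply Hprod; rewrite ?Hfx; [ring|].
  assert (Hrest : fold_right Rmult 1 (map f l) <> 0) by (intro E; apply Hprod; rewrite E; ring).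
  contradiction (IH Hrest Hx Hfx).
Qed.

Lemma Un_cv_const c : Un_cv (fun _ => c) c.
Proof.
  intros eps Heps; exists O; intros n _.
  unfold R_dist; rewrite Rminus_diag, Rabs_R0; exact Heps.
Qed.

Lemma cv_infty_INR_plus a : cv_infty (fun m => INR m + a).
Proof.
  intro M; destruct (archimed (M - a)) as [Hup _].
  exists (Z.to_nat (up (M - a))); intros n Hn.
  apply le_INR in Hn.
  assert (IZR (up (M - a)) <= INR (Z.to_nat (up (M - a)))).
  { destruct (Z_lt_le_dec (up (M - a)) 0) as [Hneg | Hnonneg].
    - apply IZR_lt in Hneg; pose proof (pos_INR (Z.to_nat (up (M - a)))); lra.
    - rewrite INR_IZR_INZ, Z2Nat.id by exact Hnonneg; lra. }
  lra.
Qed.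

Lemma digamma_partial_sums_diff x m : 0 < x ->
  sum_f_R0 (fun k => / INR (S k) - / (INR k + x)) m
  - sum_f_R0 (fun k => / INR (S k) - / (INR k + (x + 1))) m
  = / (INR m + (x + 1)) - / x.
Proof.
  intro Hx; induction m as [|m IH].
  - simpl; field; lra.
  - rewrite !tech5.
    replace (INR (S m) + x) with (INR m + (x + 1)) by (rewrite S_INR; ring).
    pose proof (pos_INR m); rewrite S_INR.
    lra.
Qed.

Lemma digamma_succ g psi x : is_digamma g psi -> 0 < x -> psi (x + 1) = psi x + / x.
Proof.
  intros Hpsi Hx.
  assert (Hdiff : Un_cv (fun m => / (INR m + (x + 1)) - / x)
                    ((psi x + g) - (psi (x + 1) + g))).
  { apply (Un_cv_ext _ _ (fun m => digamma_partial_sums_diff x m Hx)).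
    apply CV_minus; apply Hpsi; lra. }
  assert (Hlim : Un_cv (fun m => / (INR m + (x + 1)) - / x) (0 - / x)).
  { apply CV_minus; [apply cv_infty_cv_0, cv_infty_INR_plus | apply Un_cv_const]. }
  pose proof (UL_sequence _ _ _ Hdiff Hlim); lra.
Qed.

Definition labels_bounded (p : list nat) : Prop :=
  forall x, In x p -> (1 <= x <= nnodes p)%nat.

Lemma nnodes_snoc p i : nnodes (p ++ [i]) = S (nnodes p).
Proof. unfold nnodes; rewrite length_app; simpl; lia. Qed.

Lemma deg_snoc_old p i j : (j <= nnodes p)%nat ->
  deg (p ++ [i]) j = (deg p j + if Nat.eqb j i then 1 else 0)%nat.
Proof.
  intro Hj; unfold deg; rewrite count_occ_app, nnodes_snoc; simpl count_occ.
  destruct (Nat.eq_dec i j), (Nat.eqb_spec j i), (Nat.leb_spec 2 j),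
    (Nat.leb_spec j (S (nnodes p))), (Nat.leb_spec j (nnodes p)); simpl; lia.
Qed.

Lemma deg_snoc_new p i : labels_bounded p -> (i <= nnodes p)%nat ->
  deg (p ++ [i]) (S (nnodes p)) = 1%nat.
Proof.
  intros Hp Hi; unfold deg; rewrite count_occ_app, nnodes_snoc.
  rewrite (proj1 (count_occ_not_In _ _ _)) by (intro Hin; apply Hp in Hin; lia).
  simpl count_occ; destruct (Nat.eq_dec i (S (nnodes p))); [lia|].
  rewrite (proj2 (Nat.leb_le 2 _)), Nat.leb_refl by (unfold nnodes; lia); reflexivity.
Qed.

(* The handshake lemma: node 1 is the only node without a parent edge. *)
Lemma rsum_deg p : labels_bounded p ->
  rsum (fun j => INR (deg p j)) 1 (nnodes p) = 2 * INR (length p).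
Proof.
  intro Hp.
  rewrite (rsum_ext _ (fun j => INR (count_occ Nat.eq_dec p j)
                               + (1 + (-1) * (if Nat.eqb j 1 then 1 else 0)))).
  - rewrite rsum_plus, rsum_count_occ by (intros x Hx; apply Hp in Hx; lia).
    rewrite rsum_plus, rsum_const, rsum_scal, rsum_indicator.
    unfold nnodes; rewrite (proj2 (Nat.ltb_lt 1 _)), S_INR by lia; simpl; ring.
  - intros j Hj; unfold deg; rewrite plus_INR.
    destruct (Nat.leb_spec 2 j), (Nat.leb_spec j (nnodes p)), (Nat.eqb_spec j 1);
      simpl; lia || ring.
Qed.

Lemma zagreb_snoc p i : labels_bounded p -> (1 <= i <= nnodes p)%nat ->
  zagreb (p ++ [i]) = zagreb p + 2 * INR (deg p i) + 2.
Proof.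
  intros Hp Hi; unfold zagreb.
  rewrite nnodes_snoc, rsum_Sr, deg_snoc_new by (auto; lia).
  rewrite (rsum_ext _ (fun j => INR (deg p j) ^ 2
                               + (if Nat.eqb j i then 2 * INR (deg p i) + 1 else 0))).
  - rewrite rsum_plus, rsum_indicator.
    destruct (Nat.leb_spec 1 i), (Nat.ltb_spec i (1 + nnodes p)); simpl; lia || ring.
  - intros j Hj; rewrite deg_snoc_old, plus_INR by lia.
    destruct (Nat.eqb_spec j i); [subst|]; simpl; ring.
Qed.

Lemma trans_neq0_in_range p i : trans p i <> 0 -> (1 <= i <= nnodes p)%nat.
Proof.
  unfold trans; destruct (Nat.leb_spec 1 i), (Nat.leb_spec i (nnodes p)); simpl;
    lia || (intro Hzero; contradiction Hzero; reflexivity).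
Qed.

Lemma labels_bounded_of_histprob p : (1 <= length p)%nat -> 0 < histprob p ->
  labels_bounded p.
Proof.
  intros Hlen Hprob x Hx.
  destruct (In_nth p x O Hx) as [k [Hk <-]].
  destruct p as [|a q]; simpl in Hlen; [lia|].
  unfold histprob in Hprob; destruct (Nat.eqb_spec a 1); [|lra].
  destruct k as [|k]; [unfold nnodes; simpl; lia|].
  assert (Hfactor : trans (firstn (S k) (a :: q)) (nth (S k) (a :: q) O) <> 0).
  { apply (prod_map_neq0_in (fun k => trans (firstn k (a :: q)) (nth k (a :: q) O))
             (seq 1 (length (a :: q) - 1))); [lra|].
    apply in_seq; simpl in *; lia. }
  apply trans_neq0_in_range in Hfactor.
  unfold nnodes in *; rewrite length_firstn in Hfactor; simpl in *; lia.
Qed.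

Section OneStep.

Variable p : list nat.
Hypothesis Hp : labels_bounded p.
Hypothesis Hlen : (1 <= length p)%nat.

Let n := INR (length p).

Lemma INR_length_ge1 : 1 <= n.
Proof. apply (le_INR 1); exact Hlen. Qed.

Lemma trans_in_range i : (1 <= i <= nnodes p)%nat ->
  trans p i = INR (deg p i) / (2 * n).
Proof.
  intros [H1 H2]; unfold trans.
  rewrite (proj2 (Nat.leb_le _ _) H1), (proj2 (Nat.leb_le _ _) H2); reflexivity.
Qed.

Lemma rsum_trans : rsum (trans p) 1 (nnodes p) = 1.
Proof.
  pose proof INR_length_ge1.
  rewrite (rsum_ext _ (fun i => / (2 * n) * INR (deg p i))).
  - rewrite rsum_scal, rsum_deg by exact Hp; fold n; field; lra.
  - intros i Hi; rewrite trans_in_range by lia; unfold Rdiv; ring.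
Qed.

Lemma rsum_trans_zagreb :
  rsum (fun i => trans p i * zagreb (p ++ [i])) 1 (nnodes p)
  = (1 + / n) * zagreb p + 2.
Proof.
  pose proof INR_length_ge1.
  rewrite (rsum_ext _ (fun i => (zagreb p + 2) / (2 * n) * INR (deg p i)
                               + / n * INR (deg p i) ^ 2)).
  - rewrite rsum_plus, !rsum_scal, rsum_deg by exact Hp.
    fold (zagreb p) n; field; lra.
  - intros i Hi; rewrite trans_in_range, zagreb_snoc by (auto; lia).
    field; lra.
Qed.

End OneStep.

Theorem lemma4p2 (g : R) (psi : R -> R) :
  is_euler_gamma g -> is_digamma g psi ->
  forall p : list nat, (1 <= length p)%nat -> 0 < histprob p ->
    rsum (fun i => trans p i * Mseq g psi (p ++ [i])) 1 (nnodes p)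
    = Mseq g psi p.
Proof.
  (* Only Psi enters M_n. *)
  intros _ Hpsi p Hlen Hprob.
  pose proof (labels_bounded_of_histprob p Hlen Hprob) as Hp.
  pose proof (INR_length_ge1 p Hlen) as Hn.
  set (c := psi (INR (S (nnodes p))) + g).
  rewrite (rsum_ext _ (fun i => 2 / INR (nnodes p) * (trans p i * zagreb (p ++ [i]))
                               + (-4 * c) * trans p i)).
  - rewrite rsum_plus, !rsum_scal, rsum_trans_zagreb, rsum_trans by assumption.
    unfold Mseq, c, nnodes; rewrite Nat.sub_1_r; simpl Nat.pred.
    rewrite (S_INR (S _)), (digamma_succ g psi), S_INR by (auto; rewrite S_INR; lra).
    field; lra.
  - intros i _; unfold Mseq; rewrite nnodes_snoc, Nat.sub_1_r; simpl Nat.pred.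
    fold c; ring.
Qed.
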